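(* If $G$ is a connected locally finite quasi-transitive graph with exactly $2$ ends, then there exists a periodic proper edge-coloring of $G$ with $\chi'(G)$ colors.
   Context: A graph is locally finite if every vertex has finite degree; quasi-transitive if $V(G)$ has finitely many orbits under $\mathrm{Aut}(G)$. Ends are equivalence classes of rays (infinite one-way paths), two rays being equivalent if there are infinitely many disjoint paths between them. $\chi'(G)$ is the chromatic index, the minimum number of colors in a proper edge-coloring (adjacent edges get distinct colors). An edge-coloring is periodic if the subgroup of automorphisms of $G$ mapping every edge to an edge of the same color has finitely many orbits on $V(G)$. *)

From Stdlib Require Import List Arith.
Import ListNotations.

Section Graphs.
Context {V : Type}.
Variable adj : V -> V -> Prop.

Definition simple_graph : Prop :=
  (forall x y, adj x y -> adj y x) /\ (forall x, ~ adj x x).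

Definition locally_finite : Prop :=
  forall v, exists l : list V, forall w, adj v w -> In w l.

Fixpoint adj_chain (l : list V) : Prop :=
  match l with
  | x :: ((y :: _) as t) => adj x y /\ adj_chain t
  | _ => True
  end.

Definition is_path (p : list V) : Prop :=
  p <> [] /\ NoDup p /\ adj_chain p.

Definition path_from_to (p : list V) (u v : V) : Prop :=
  is_path p /\ hd_error p = Some u /\ hd_error (rev p) = Some v.

Definition connected : Prop :=
  forall u v, exists p, path_from_to p u v.

Definition automorphism (f : V -> V) : Prop :=
  (exists g : V -> V, (forall x, g (f x) = x) /\ (forall x, f (g x) = x)) /\
  (forall x y, adj x y <-> adj (f x) (f y)).

Definition quasi_transitive : Prop :=
  exists S : list V, forall v, exists s f, In s S /\ automorphism f /\ f s = v.

Definition ray (r : nat -> V) : Prop :=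
  (forall m n, r m = r n -> m = n) /\ (forall n, adj (r n) (r (S n))).

Definition equiv_rays (r1 r2 : nat -> V) : Prop :=
  exists P : nat -> list V,
    (forall i, exists m n, path_from_to (P i) (r1 m) (r2 n)) /\
    (forall i j x, i <> j -> In x (P i) -> ~ In x (P j)).

Definition has_exactly_two_ends : Prop :=
  exists r1 r2, ray r1 /\ ray r2 /\ ~ equiv_rays r1 r2 /\
    forall r, ray r -> equiv_rays r r1 \/ equiv_rays r r2.

(* edge colourings are represented by c : V -> V -> nat, c x y being the
   colour of the edge xy (values on non-edges are irrelevant) *)
Definition proper_edge_coloring (k : nat) (c : V -> V -> nat) : Prop :=
  (forall x y, adj x y -> c x y = c y x) /\
  (forall x y, adj x y -> c x y < k) /\
  (forall x y z, adj x y -> adj x z -> y <> z -> c x y <> c x z).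

Definition edge_colorable (k : nat) : Prop :=
  exists c, proper_edge_coloring k c.

Definition is_chromatic_index (k : nat) : Prop :=
  edge_colorable k /\ forall j, edge_colorable j -> k <= j.

Definition color_preserving_aut (c : V -> V -> nat) (f : V -> V) : Prop :=
  automorphism f /\ forall x y, adj x y -> c (f x) (f y) = c x y.

Definition periodic_coloring (c : V -> V -> nat) : Prop :=
  exists S : list V, forall v, exists s f,
    In s S /\ color_preserving_aut c f /\ f s = v.

End Graphs.

(* Two-endedness and quasi-transitivity yield an automorphism t acting as a translation: a
   finite set Fk and one side Ak of it, separating the two ends, such that t maps Ak and Fk
   into Ak. (Quasi-transitivity moves a connected finite separator far towards one end; if
   that automorphism swaps the ends, composing two such automorphisms gives one that does
   not.) The sets t^j(Ak) are nested, and the j with v in t^(j-1)(Ak) but not in t^j(Ak) is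
   a level function: t raises it by 1, edges change it by at most 1, and level 0 is finite,
   since an infinite level would contain a ray (König) belonging to neither end.
   Given any proper k-edge-colouring, its restrictions to the translates t^n(levels 0, 1)
   take finitely many values, so they agree for some n = a < b. Recolouring each edge like
   its translate into the levels [a, b) stays proper, because at the seams the colouring
   agrees with its translate by t^(b-a), and is invariant under t^(b-a), which has finitely
   many orbits. So chi'(G) colours suffice. *)

From Stdlib Require Import List Lia ZArith.
From Stdlib Require Import Classical ClassicalEpsilon FunctionalExtensionality.
From Stdlib Require FinFun.
Import ListNotations.

Lemma injective_choice_length_le {A : Type} (Q : nat -> A -> Prop) (W : list A) (N : nat) :
  (forall i, i < N -> exists y, In y W /\ Q i y) ->
  (forall i j y, Q i y -> Q j y -> i = j) -> N <= length W.
Proof.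
  intros HQ Hinj.
  assert (exists l, length l = N /\ NoDup l /\ incl l W /\
            forall y, In y l -> exists i, i < N /\ Q i y) as [l [Hl [Hnd [Hinc _]]]].
  { induction N as [|N IH].
    - exists []. repeat split; auto using NoDup_nil; intros y [].
    - destruct IH as [l [Hl [Hnd [Hinc Hq]]]]; [intros i Hi; apply HQ; lia|].
      destruct (HQ N (Nat.lt_succ_diag_r N)) as [y [Hy Qy]].
      exists (y :: l). repeat split.
      + simpl; lia.
      + constructor; auto. intro Hin. destruct (Hq y Hin) as [i [Hi Qi]].
        assert (i = N) by (eapply Hinj; eauto). lia.
      + intros a [<-|Ha]; auto.
      + intros a [<-|Ha]; [exists N; auto|].
        destruct (Hq a Ha) as [i [Hi Qi]]. exists i; split; auto. }
  rewrite <- Hl. apply NoDup_incl_length; auto.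
Qed.

Lemma finite_range_repeats {A : Type} (f : nat -> A) (W : list A) :
  (forall n, In (f n) W) -> exists a b, a < b /\ f a = f b.
Proof.
  intros HW. apply NNPP; intro Hn.
  assert (S (length W) <= length W); [|lia].
  apply (injective_choice_length_le (fun i y => y = f i) W).
  - intros i _. exists (f i). auto.
  - intros i j y -> E. destruct (Nat.lt_trichotomy i j) as [h|[h|h]]; auto;
      exfalso; apply Hn; [exists i, j | exists j, i]; auto.
Qed.

Fixpoint bounded_lists (len bound : nat) : list (list nat) :=
  match len with
  | O => [[]]
  | S len => flat_map (fun x => map (cons x) (bounded_lists len bound)) (seq 0 (S bound))
  end.

Lemma in_bounded_lists len bound l :
  length l = len -> Forall (fun x => x <= bound) l -> In l (bounded_lists len bound).
Proof.
  revert l; induction len as [|len IH]; intros l Hl Hf.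
  - destruct l; simpl in *; [auto | discriminate].
  - destruct l as [|x l]; simpl in Hl; [discriminate|]. inversion Hf; subst.
    apply in_flat_map. exists x. split; [apply in_seq; lia | apply in_map, IH; auto].
Qed.

Section Graph.
Context {V : Type} (adj : V -> V -> Prop).
Hypothesis adj_sym : forall x y, adj x y -> adj y x.
Hypothesis locfin : locally_finite adj.
Hypothesis conn : connected adj.

Definition neighbours (v : V) : list V :=
  proj1_sig (constructive_indefinite_description _ (locfin v)).

Lemma in_neighbours v w : adj v w -> In w (neighbours v).
Proof. unfold neighbours. destruct (constructive_indefinite_description _ _) as [l Hl]. auto. Qed.

(** * Walks and boundaries *)

Inductive walk (P : V -> Prop) : nat -> V -> V -> Prop :=
| walk_nil x : P x -> walk P 0 x x
| walk_cons n x y z : P x -> adj x y -> walk P n y z -> walk P (S n) x z.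

Definition reach (P : V -> Prop) (x y : V) : Prop := exists n, walk P n x y.

Lemma walk_first P n x y : walk P n x y -> P x.
Proof. intros H; inversion H; auto. Qed.

Lemma walk_last P n x y : walk P n x y -> P y.
Proof. induction 1; auto. Qed.

Lemma walk_weaken (P Q : V -> Prop) n x y :
  (forall v, P v -> Q v) -> walk P n x y -> walk Q n x y.
Proof. intros HPQ; induction 1; econstructor; eauto. Qed.

Lemma walk_snoc P n x y z : walk P n x y -> adj y z -> P z -> walk P (S n) x z.
Proof. induction 1; intros; econstructor; eauto using walk_nil. Qed.

Lemma walk_app P n m x y z : walk P n x y -> walk P m y z -> walk P (n + m) x z.
Proof. induction 1; intros; simpl; auto. econstructor; eauto. Qed.

Lemma walk_rev P n x y : walk P n x y -> walk P n y x.
Proof. induction 1; [constructor; auto | eapply walk_snoc; eauto]. Qed.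

Lemma walk_map (P Q : V -> Prop) (h : V -> V) n x y :
  (forall a b, adj a b -> adj (h a) (h b)) -> (forall v, P v -> Q (h v)) ->
  walk P n x y -> walk Q n (h x) (h y).
Proof. intros Ha HPQ; induction 1; econstructor; eauto. Qed.

Definition boundary_in (X B : V -> Prop) : Prop :=
  forall a b, X a -> adj a b -> ~ X b -> B b.

Lemma walk_meets_boundary P X B n x y :
  boundary_in X B -> walk P n x y -> X x -> ~ X y -> exists z, P z /\ B z.
Proof.
  intros Hb. induction 1 as [|n x y z Px Axy W IH]; intros Hx Hz; [contradiction|].
  destruct (classic (X y)) as [Xy|Xy]; auto.
  exists y. split; [eapply walk_first; eauto | eapply Hb; eauto].
Qed.

Lemma walk_avoiding_boundary X B n x y :
  boundary_in X B -> walk (fun v => ~ B v) n x y -> (X x <-> X y).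
Proof.
  intros Hb. induction 1 as [|n x y z Px Axy W IH]; [tauto|].
  rewrite <- IH. split; intros Hx; apply NNPP; intro Hn.
  - apply (walk_first _ _ _ _ W). eapply Hb; eauto.
  - apply Px. eapply Hb; eauto.
Qed.

Lemma edge_avoiding_boundary X (B : V -> Prop) a b :
  boundary_in X B -> adj a b -> ~ B a -> ~ B b -> (X a <-> X b).
Proof.
  intros Hb Hab Ha Hb'. apply (walk_avoiding_boundary X B 1 a b Hb).
  econstructor; eauto using walk_nil.
Qed.

Lemma walk_exit X P n x y : walk P n x y -> X x -> ~ X y ->
  exists n' a b, walk X n' x a /\ adj a b /\ ~ X b.
Proof.
  induction 1 as [x|n x y z Px Axy W IH]; intros Hx Hz; [contradiction|].
  destruct (classic (X y)) as [Xy|Xy].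
  - destruct (IH Xy Hz) as [n' [a [b [Wa [Hab Hb]]]]].
    exists (S n'), a, b. repeat split; auto. econstructor; eauto.
  - exists 0, x, y. repeat split; auto using walk_nil.
Qed.

Lemma adj_chain_walk (p : list V) x : adj_chain adj (x :: p) ->
  forall y, In y (x :: p) -> exists n, n <= length p /\ walk (fun z => In z (x :: p)) n x y.
Proof.
  revert x. induction p as [|a p IH]; intros x Hc y Hy.
  - destruct Hy as [<-|[]]. exists 0. split; auto. constructor. left; auto.
  - destruct Hy as [<-|Hy]; [exists 0; split; [lia | constructor; left; auto]|].
    destruct Hc as [Hxa Hc]. destruct (IH a Hc y Hy) as [n [Hn W]].
    exists (S n). split; [simpl; lia|]. econstructor; [left; auto | exact Hxa |].
    eapply walk_weaken; [|exact W]. intros v Hv. right; auto.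
Qed.

Lemma last_in (p : list V) v : hd_error (rev p) = Some v -> In v p.
Proof.
  intros H. apply in_rev. destruct (rev p); simpl in H; [discriminate|].
  injection H as ->. left; auto.
Qed.

Lemma path_walk p u v : path_from_to adj p u v -> exists n, walk (fun z => In z p) n u v.
Proof.
  intros [[Hne [_ Hc]] [Hh Hl]]. destruct p as [|x p]; [congruence|].
  simpl in Hh. injection Hh as <-.
  destruct (adj_chain_walk p x Hc v (last_in _ _ Hl)) as [n [_ W]]. eauto.
Qed.

Lemma adj_chain_suffix (l1 l2 : list V) : adj_chain adj (l1 ++ l2) -> adj_chain adj l2.
Proof.
  induction l1 as [|a l1 IH]; simpl; auto. intros H. apply IH.
  destruct l1; simpl in *; [destruct l2|]; tauto.
Qed.

Lemma hd_rev_app (l1 l2 : list V) a :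
  hd_error (rev (l1 ++ a :: l2)) = hd_error (rev (a :: l2)).
Proof.
  rewrite rev_app_distr. destruct (rev (a :: l2)) eqn:E; auto.
  apply (f_equal (@length V)) in E. rewrite length_rev in E. discriminate.
Qed.

Lemma walk_path P n x y : walk P n x y ->
  exists p, path_from_to adj p x y /\ forall z, In z p -> P z.
Proof.
  induction 1 as [x Px|n x y z Px Axy W IH].
  - exists [x]. repeat split; try congruence.
    + constructor; auto using NoDup_nil.
    + intros a [<-|[]]; auto.
  - destruct IH as [p [[[Hne [Hnd Hc]] [Hh Hl]] HP]].
    destruct p as [|y' p]; [congruence|]. simpl in Hh. injection Hh as ->.
    destruct (classic (In x (y :: p))) as [Hin|Hin].
    + apply in_split in Hin. destruct Hin as [l1 [l2 E]].
      exists (x :: l2). rewrite E in *. repeat split.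
      * congruence.
      * eapply NoDup_app_remove_l; eauto.
      * eapply adj_chain_suffix; eauto.
      * rewrite hd_rev_app in Hl. auto.
      * intros a Ha. apply HP. apply in_or_app; right; auto.
    + exists (x :: y :: p). split; [split; [split; [congruence | split] | split] |].
      * constructor; auto.
      * simpl. auto.
      * reflexivity.
      * rewrite <- Hl. apply (hd_rev_app [x]).
      * intros a [<-|Ha]; auto.
Qed.

Lemma connected_walk_in_list u v : exists p n, walk (fun z => In z p) n u v.
Proof.
  destruct (conn u v) as [p Hp]. destruct (path_walk p u v Hp) as [n W]. eauto.
Qed.

Lemma connected_walk u v : exists n, walk (fun _ => True) n u v.
Proof.
  destruct (connected_walk_in_list u v) as [p [n W]].
  exists n. eapply walk_weaken; [|eauto]. auto.
Qed.

(** * Automorphisms and ends *)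

Record aut_pair (h hi : V -> V) : Prop := {
  aut_pair_inv_l : forall x, hi (h x) = x;
  aut_pair_inv_r : forall x, h (hi x) = x;
  aut_pair_adj_iff : forall x y, adj x y <-> adj (h x) (h y) }.
#[global] Arguments aut_pair_inv_l {h hi}.
#[global] Arguments aut_pair_inv_r {h hi}.
#[global] Arguments aut_pair_adj_iff {h hi}.

Lemma aut_pair_sym h hi : aut_pair h hi -> aut_pair hi h.
Proof.
  intros [H1 H2 H3]. split; auto. intros x y.
  rewrite (H3 (hi x) (hi y)), !H2. tauto.
Qed.

Lemma aut_pair_comp h hi g gi :
  aut_pair h hi -> aut_pair g gi -> aut_pair (fun x => h (g x)) (fun x => gi (hi x)).
Proof.
  intros [H1 H2 H3] [G1 G2 G3]. split; intros; try congruence.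
  rewrite G3, H3. tauto.
Qed.

Lemma aut_pair_of_automorphism f : automorphism adj f -> exists fi, aut_pair f fi.
Proof. intros [[g [H1 H2]] H3]. exists g. split; auto. Qed.

Lemma automorphism_of_aut_pair h hi : aut_pair h hi -> automorphism adj h.
Proof. intros [H1 H2 H3]. split; auto. exists hi; auto. Qed.

Lemma aut_pair_adj h hi a b : aut_pair h hi -> adj a b -> adj (h a) (h b).
Proof. intros Hh Hab. exact (proj1 (aut_pair_adj_iff Hh a b) Hab). Qed.

Lemma aut_pair_inj h hi a b : aut_pair h hi -> h a = h b -> a = b.
Proof.
  intros Hh E. rewrite <- (aut_pair_inv_l Hh a), <- (aut_pair_inv_l Hh b), E. auto.
Qed.

Lemma in_map_aut_pair h hi (L : list V) v : aut_pair h hi -> (In v (map h L) <-> In (hi v) L).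
Proof.
  intros Hh. rewrite in_map_iff. split.
  - intros [x [<- Hx]]. rewrite (aut_pair_inv_l Hh). auto.
  - intros H. exists (hi v). rewrite (aut_pair_inv_r Hh). auto.
Qed.

Definition eventually (P : V -> Prop) (r : nat -> V) : Prop :=
  exists m0, forall m, m0 <= m -> P (r m).

Lemma eventually_weaken (P Q : V -> Prop) r :
  (forall v, P v -> Q v) -> eventually P r -> eventually Q r.
Proof. intros H [m Hm]. exists m. auto. Qed.

Lemma ray_map r h hi : ray adj r -> aut_pair h hi -> ray adj (fun n => h (r n)).
Proof.
  intros [Ri Ra] Hh. split.
  - intros m n E. apply Ri. eapply aut_pair_inj; eauto.
  - intros n. eapply aut_pair_adj; eauto.
Qed.

Lemma ray_eventually_avoids r (L : list V) : ray adj r -> eventually (fun v => ~ In v L) r.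
Proof.
  intros [Ri _]. induction L as [|a L [N HN]].
  - exists 0. intros n _ [].
  - destruct (classic (exists k, r k = a)) as [[k Hk]|Hk].
    + exists (Nat.max N (S k)). intros n Hn [E|E].
      * subst a. apply Ri in E. lia.
      * apply (HN n); auto. lia.
    + exists N. intros n Hn [E|E]; [apply Hk; eauto | apply (HN n); auto].
Qed.

Lemma ray_eventually_one_side r X (L : list V) : ray adj r -> boundary_in X (fun v => In v L) ->
  eventually X r \/ eventually (fun v => ~ X v /\ ~ In v L) r.
Proof.
  intros Hr Hb. destruct (ray_eventually_avoids r L Hr) as [N HN].
  assert (Hstay : forall k, X (r N) <-> X (r (N + k))).
  { induction k; [rewrite Nat.add_0_r; tauto|]. rewrite IHk.
    replace (N + S k) with (S (N + k)) by lia.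
    apply (edge_avoiding_boundary X (fun v => In v L)); auto;
      [apply Hr | apply HN; lia | apply HN; lia]. }
  destruct (classic (X (r N))) as [H|H]; [left|right]; exists N; intros m Hm;
    replace m with (N + (m - N)) by lia; rewrite <- Hstay; auto.
  split; auto. apply HN; lia.
Qed.

Lemma path_map p u v h hi : aut_pair h hi -> path_from_to adj p u v ->
  path_from_to adj (map h p) (h u) (h v).
Proof.
  intros Hh [[Hne [Hnd Hc]] [Hhd Hl]]. split; [split; [|split]|split].
  - destruct p; simpl; congruence.
  - apply FinFun.Injective_map_NoDup; auto. intros a b; eapply aut_pair_inj; eauto.
  - clear -Hc Hh. induction p as [|a p IH]; simpl; auto. destruct p as [|b p]; simpl in *; auto.
    destruct Hc as [H1 H2]. split; [eapply aut_pair_adj; eauto | apply IH; auto].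
  - destruct p; simpl in *; congruence.
  - rewrite <- map_rev. destruct (rev p); simpl in *; congruence.
Qed.

Lemma equiv_rays_map r1 r2 h hi : aut_pair h hi -> equiv_rays adj r1 r2 ->
  equiv_rays adj (fun n => h (r1 n)) (fun n => h (r2 n)).
Proof.
  intros Hh [P [HP HD]]. exists (fun i => map h (P i)). split.
  - intros i. destruct (HP i) as [m [n Hp]]. exists m, n. eapply path_map; eauto.
  - intros i j x Hij H1 H2. apply in_map_iff in H1, H2.
    destruct H1 as [a [Ea Ha]], H2 as [b [Eb Hb]]. subst x.
    apply (aut_pair_inj h hi) in Eb; auto. subst. eapply HD; eauto.
Qed.

Lemma equiv_rays_map_inv r1 r2 h hi : aut_pair h hi ->
  equiv_rays adj (fun n => h (r1 n)) (fun n => h (r2 n)) -> equiv_rays adj r1 r2.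
Proof.
  intros Hh E. apply (equiv_rays_map _ _ _ _ (aut_pair_sym _ _ Hh)) in E.
  replace r1 with (fun n => hi (h (r1 n)))
    by (apply functional_extensionality; intros; apply (aut_pair_inv_l Hh)).
  replace r2 with (fun n => hi (h (r2 n)))
    by (apply functional_extensionality; intros; apply (aut_pair_inv_l Hh)).
  auto.
Qed.

Lemma finite_boundary_blocks_disjoint_walks X (B : list V) rho sigma (P : nat -> list V) :
  boundary_in X (fun v => In v B) -> eventually X rho -> eventually (fun v => ~ X v) sigma ->
  (forall i j x, i <> j -> In x (P i) -> ~ In x (P j)) ->
  (forall i, exists m n k, walk (fun z => In z (P i)) k (rho m) (sigma n)) -> False.
Proof.
  intros Hb [m0 Hm0] [n0 Hn0] HD HW.
  set (L := B ++ map rho (seq 0 m0) ++ map sigma (seq 0 n0)).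
  assert (exists i, forall x, In x (P i) -> ~ In x L) as [i Hi].
  { apply NNPP; intro Hn.
    assert (S (length L) <= length L); [|lia].
    apply (injective_choice_length_le (fun i y => In y (P i) /\ In y L) L).
    - intros i _. apply NNPP; intro Hn2. apply Hn. exists i. intros x Hx HL. apply Hn2. eauto.
    - intros i j y [H1 _] [H2 _]. apply NNPP; intro Hij. eapply HD; eauto. }
  destruct (HW i) as [m [n [k W]]].
  assert (Hm : m0 <= m).
  { apply NNPP; intro Hm. apply (Hi (rho m) (walk_first _ _ _ _ W)).
    apply in_or_app; right; apply in_or_app; left. apply in_map, in_seq. lia. }
  assert (Hn : n0 <= n).
  { apply NNPP; intro Hn. apply (Hi (sigma n) (walk_last _ _ _ _ W)).
    apply in_or_app; right; apply in_or_app; right. apply in_map, in_seq. lia. }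
  destruct (walk_meets_boundary _ _ _ _ _ _ Hb W (Hm0 m Hm) (Hn0 n Hn)) as [z [Hz HzB]].
  apply (Hi z Hz). apply in_or_app; left; auto.
Qed.

Lemma finite_boundary_separates_rays X (B : list V) rho sigma :
  boundary_in X (fun v => In v B) -> eventually X rho -> eventually (fun v => ~ X v) sigma ->
  ~ equiv_rays adj rho sigma /\ ~ equiv_rays adj sigma rho.
Proof.
  intros Hb Hr Hs. split; intros [P [HP HD]];
    apply (finite_boundary_blocks_disjoint_walks X B rho sigma P Hb Hr Hs HD);
    intros i; destruct (HP i) as [m [n Hp]]; destruct (path_walk _ _ _ Hp) as [k W].
  - exists m, n, k. auto.
  - exists n, m, k. apply walk_rev; auto.
Qed.

Definition finite_set (X : V -> Prop) : Prop := exists l, forall x, X x -> In x l.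

Lemma finite_set_subset (X Y : V -> Prop) :
  (forall x, X x -> Y x) -> finite_set Y -> finite_set X.
Proof. intros H [l Hl]. exists l; auto. Qed.

Lemma inhabited_of_not_finite_set (X : V -> Prop) : ~ finite_set X -> exists x, X x.
Proof. intros H. apply NNPP; intro Hn. apply H. exists []. intros x Hx. apply Hn; eauto. Qed.

Lemma finite_set_cover (X Y0 : V -> Prop) (E : list V) (R : V -> V -> Prop) :
  (forall x, X x -> Y0 x \/ exists e, In e E /\ R e x) ->
  finite_set Y0 -> (forall e, In e E -> finite_set (R e)) -> finite_set X.
Proof.
  intros H [l0 Hl0] HR.
  assert (exists l, forall e x, In e E -> R e x -> In x l) as [l Hl].
  { clear H. induction E as [|a E IH].
    - exists []. intros e x [].
    - destruct IH as [l Hl]; [intros; apply HR; right; auto|].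
      destruct (HR a (or_introl eq_refl)) as [la Hla].
      exists (la ++ l). intros e x [<-|He] Hx; apply in_or_app; eauto. }
  exists (l0 ++ l). intros x Hx. apply in_or_app.
  destruct (H x Hx) as [Y|[e [He Re]]]; eauto.
Qed.

(* König's lemma: a greedy ray can keep infinitely many vertices reachable in X while
   avoiding its own past. *)
Definition avoiding (X : V -> Prop) (p : list V) (u : V) : Prop := X u /\ ~ In u p.

Definition extendable (X : V -> Prop) (p : list V) (v : V) : Prop :=
  ~ finite_set (reach (avoiding X p) v).

Lemma extendable_avoiding X p v : extendable X p v -> avoiding X p v.
Proof.
  intros H. destruct (inhabited_of_not_finite_set _ H) as [y [n W]]. exact (walk_first _ _ _ _ W).
Qed.

Lemma walk_avoiding_split X p v n u y : walk (avoiding X p) n u y ->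
  reach (avoiding X (v :: p)) u y \/ y = v \/
  exists w, adj v w /\ reach (avoiding X (v :: p)) w y.
Proof.
  induction 1 as [y [Xy Py]|n u z y [Xu Pu] Auz W IH].
  - destruct (classic (y = v)) as [E|E]; auto.
    left. exists 0. constructor. split; auto. intros [Q|Q]; auto.
  - destruct IH as [[k Wk]|[E|Hw]]; auto.
    destruct (classic (u = v)) as [<-|E].
    + right; right. exists z. split; auto. exists k; auto.
    + left. exists (S k). econstructor; eauto. split; auto. intros [Q|Q]; auto.
Qed.

Lemma extendable_step X p v : extendable X p v -> exists w, adj v w /\ extendable X (v :: p) w.
Proof.
  intros Hinf. apply NNPP; intro Hno. apply Hinf.
  apply (finite_set_cover _ (fun y => y = v) (neighbours v)
           (fun w y => adj v w /\ reach (avoiding X (v :: p)) w y)).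
  - intros y [n W].
    destruct (walk_avoiding_split X p v n v y W) as [[k Wk]|[E|[w [Hvw Hw]]]]; auto.
    + exfalso. apply (walk_first _ _ _ _ Wk). left; auto.
    + right. exists w. auto using in_neighbours.
  - exists [v]. intros x ->. left; auto.
  - intros w _. apply NNPP; intro Hf. apply Hno.
    destruct (inhabited_of_not_finite_set _ Hf) as [y [Hvw _]].
    exists w. split; auto. intro Hfin. apply Hf. eapply finite_set_subset; [|exact Hfin]. tauto.
Qed.

Lemma reach_from_entry X (B : list V) z : boundary_in X (fun v => In v B) -> X z ->
  forall n x, walk (fun _ => True) n x z -> X x ->
  exists e, (z = e \/ In e (concat (map neighbours B))) /\ reach (avoiding X []) e x.
Proof.
  intros Hb Xz n x W. induction W as [x _|n x y z' _ Axy W IH]; intros Hx.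
  - exists x. split; [left; auto|]. exists 0. constructor. split; auto.
  - destruct (classic (X y)) as [Xy|Xy].
    + destruct (IH Xz Xy) as [e [He [k Wk]]]. exists e. split; auto. exists (S k).
      eapply walk_snoc; eauto. split; auto.
    + exists x. split.
      * right. apply in_concat. exists (neighbours y).
        split; [apply in_map; eapply Hb; eauto | auto using in_neighbours].
      * exists 0. constructor. split; auto.
Qed.

Lemma extendable_start X (B : list V) : boundary_in X (fun v => In v B) -> ~ finite_set X ->
  exists e, extendable X [] e.
Proof.
  intros Hb Hinf. destruct (inhabited_of_not_finite_set _ Hinf) as [z Xz].
  apply NNPP; intro Hn. apply Hinf.
  apply (finite_set_cover _ (fun _ => False) (z :: concat (map neighbours B))
           (reach (avoiding X []))).
  - intros x Hx. right. destruct (connected_walk x z) as [n W].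
    destruct (reach_from_entry X B z Hb Xz n x W Hx) as [e [He R]].
    exists e. destruct He as [<-|He]; split; simpl; auto.
  - exists []. tauto.
  - intros e _. apply NNPP; intro Hf. apply Hn. exists e. exact Hf.
Qed.

Lemma ray_of_extendable X v0 : extendable X [] v0 -> exists r, ray adj r /\ forall n, X (r n).
Proof.
  intros H0.
  set (ok := fun s : list V * V => extendable X (fst s) (snd s)).
  set (next := fun s : list V * V => epsilon (inhabits s)
         (fun s' => fst s' = snd s :: fst s /\ adj (snd s) (snd s') /\ ok s')).
  assert (Hnext : forall s, ok s ->
            fst (next s) = snd s :: fst s /\ adj (snd s) (snd (next s)) /\ ok (next s)).
  { intros s Hs. apply epsilon_spec.
    destruct (extendable_step X _ _ Hs) as [w [Hw Hx]]. exists (snd s :: fst s, w). auto. }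
  set (st := fun n => Nat.iter n next ([], v0)).
  assert (Hst : forall n, ok (st n)) by (induction n; [exact H0 | apply Hnext; auto]).
  set (r := fun n => snd (st n)).
  assert (Hhist : forall m n, m < n -> In (r m) (fst (st n))).
  { intros m n Hmn. induction Hmn as [|n Hmn IH];
      [change (st (S m)) with (next (st m)) | change (st (S n)) with (next (st n))];
      rewrite (proj1 (Hnext _ (Hst _))); [left | right]; auto. }
  assert (Hfresh : forall n, avoiding X (fst (st n)) (r n))
    by (intros; apply extendable_avoiding, Hst).
  exists r. split; [split|].
  - intros m n Emn. destruct (Nat.lt_trichotomy m n) as [h|[h|h]]; auto; exfalso;
      apply Hhist in h; [rewrite Emn in h | rewrite <- Emn in h]; eapply Hfresh; eauto.
  - intros n. exact (proj1 (proj2 (Hnext _ (Hst n)))).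
  - intros n. apply Hfresh.
Qed.

Lemma ray_in_infinite_set X (B : list V) : boundary_in X (fun v => In v B) -> ~ finite_set X ->
  exists r, ray adj r /\ forall n, X (r n).
Proof.
  intros Hb Hinf. destruct (extendable_start X B Hb Hinf) as [v0 H0].
  exact (ray_of_extendable X v0 H0).
Qed.

(** * Cuts and linked sets *)

Record cut (F : list V) (A : V -> Prop) : Prop := {
  cut_disjoint : forall v, A v -> ~ In v F;
  cut_boundary : boundary_in A (fun v => In v F) }.
#[global] Arguments cut_disjoint {F A}.
#[global] Arguments cut_boundary {F A}.

Definition opposite_side (F : list V) (A : V -> Prop) (v : V) : Prop := ~ A v /\ ~ In v F.

Lemma cut_opposite_side F A : cut F A -> cut F (opposite_side F A).
Proof.
  intros [H1 H2]. split; [intros v [_ H]; auto|].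
  intros a b [Na Fa] Hab Hb. apply NNPP; intro Fb. apply Hb. split; auto.
  intro Ab. apply Fa. eapply H2; eauto.
Qed.

Lemma opposite_side_involutive F A v : cut F A -> (opposite_side F (opposite_side F A) v <-> A v).
Proof.
  intros Hc. unfold opposite_side. split.
  - intros [H1 H2]. apply NNPP; intro H. apply H1. auto.
  - intros H. split; [intros [H' _]; auto | apply (cut_disjoint Hc); auto].
Qed.

Lemma cut_map F A h hi : aut_pair h hi -> cut F A -> cut (map h F) (fun v => A (hi v)).
Proof.
  intros Hh [H1 H2]. split.
  - intros v Hv. rewrite (in_map_aut_pair h hi); auto.
  - intros a b Ha Hab Hb. rewrite (in_map_aut_pair h hi); auto.
    eapply H2; eauto. eapply aut_pair_adj; [apply aut_pair_sym|]; eauto.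
Qed.

Lemma opposite_side_map F A h hi v : aut_pair h hi ->
  (opposite_side (map h F) (fun v => A (hi v)) v <-> opposite_side F A (hi v)).
Proof. intros Hh. unfold opposite_side. rewrite (in_map_aut_pair h hi); tauto. Qed.

Lemma cut_complement F : cut F (fun v => ~ In v F).
Proof. split; auto. intros a b _ _ Hb. apply NNPP; auto. Qed.

Lemma walk_in_reach X n x y : walk X n x y -> walk (reach X x) n x y.
Proof.
  induction 1 as [x Xx|n x y z Xx Axy W IH]; [constructor; exists 0; constructor; auto|].
  econstructor; [exists 0; constructor; auto | exact Axy |].
  eapply walk_weaken; [|exact IH]. intros v [k Wk]. exists (S k). econstructor; eauto.
Qed.

Lemma cut_reach F X x0 : cut F X -> cut F (reach X x0).
Proof.
  intros [H1 H2]. split.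
  - intros v [n W]. apply H1. exact (walk_last _ _ _ _ W).
  - intros a b [n W] Hab Hb. apply (H2 a); [exact (walk_last _ _ _ _ W) | exact Hab |].
    intros Xb. apply Hb. exists (S n). eapply walk_snoc; eauto.
Qed.

Definition linked (K : V -> Prop) : Prop :=
  forall x y, K x -> K y -> exists n, walk K n x y.

Lemma linked_ext (K K' : V -> Prop) : (forall v, K v <-> K' v) -> linked K -> linked K'.
Proof.
  intros E HK x y Hx Hy. apply E in Hx, Hy. destruct (HK x y Hx Hy) as [n W].
  exists n. eapply walk_weaken; [|exact W]. apply E.
Qed.

Lemma linked_map u ui (K : V -> Prop) : aut_pair u ui -> linked K -> linked (fun v => K (ui v)).
Proof.
  intros Hu HK x y Hx Hy. destruct (HK _ _ Hx Hy) as [n W]. exists n.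
  rewrite <- (aut_pair_inv_r Hu x), <- (aut_pair_inv_r Hu y).
  apply (walk_map K); [intros; eapply aut_pair_adj; eauto | | exact W].
  intros v Hv. rewrite (aut_pair_inv_l Hu). auto.
Qed.

Lemma linked_one_side (K : V -> Prop) (F : list V) (A : V -> Prop) :
  boundary_in A (fun v => In v F) -> linked K -> (forall v, K v -> ~ In v F) ->
  forall x y, K x -> K y -> A x -> A y.
Proof.
  intros Hb HK HKF x y Hx Hy Ax. destruct (HK x y Hx Hy) as [n W].
  apply (walk_avoiding_boundary A _ n x y Hb); auto.
  eapply walk_weaken; [|exact W]. exact HKF.
Qed.

Lemma linked_reach_union (F : list V) X x0 : cut F X -> linked (fun v => In v F) ->
  (exists f, In f F) -> X x0 -> linked (fun v => reach X x0 v \/ In v F).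
Proof.
  intros Hc HF [f Hf] Hx0.
  set (K := fun v => reach X x0 v \/ In v F).
  assert (Hreach : forall n y, walk X n x0 y -> walk K n x0 y).
  { intros n y W. eapply walk_weaken; [|exact (walk_in_reach _ _ _ _ W)]. unfold K; auto. }
  assert (Hto_f : forall y, K y -> exists n, walk K n y f).
  { intros y [[k Wy] | Hy].
    - destruct (connected_walk x0 f) as [n W].
      assert (Hnf : ~ X f) by (intro Xf; exact (cut_disjoint Hc f Xf Hf)).
      destruct (walk_exit X _ n x0 f W Hx0 Hnf) as [k' [a [b [Wa [Hab Hb]]]]].
      assert (Fb : In b F) by exact (cut_boundary Hc a b (walk_last _ _ _ _ Wa) Hab Hb).
      destruct (HF b f Fb Hf) as [m Wb].
      exists (k + (S k' + m)). apply walk_app with x0; [apply walk_rev, Hreach; auto|].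
      apply walk_app with b; [apply walk_snoc with a; auto; unfold K; auto|].
      eapply walk_weaken; [|exact Wb]. unfold K; auto.
    - destruct (HF y f Hy Hf) as [n W]. exists n.
      eapply walk_weaken; [|exact W]. unfold K; auto. }
  intros x y Hx Hy. destruct (Hto_f x Hx) as [n Wx], (Hto_f y Hy) as [m Wy].
  exists (n + m). apply walk_app with f; auto. apply walk_rev; auto.
Qed.

Fixpoint ball (L : list V) (r : nat) : list V :=
  match r with
  | 0 => L
  | S r => ball L r ++ concat (map neighbours (ball L r))
  end.

Lemma ball_mono L r r' x : r <= r' -> In x (ball L r) -> In x (ball L r').
Proof. induction 1; auto. intros; simpl; apply in_or_app; auto. Qed.

Lemma walk_in_ball L P n x y : walk P n x y -> forall k, In x (ball L k) -> In y (ball L (k + n)).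
Proof.
  induction 1 as [x _|n x y z _ Axy W IH]; intros k Hx; [rewrite Nat.add_0_r; auto|].
  replace (k + S n) with (S k + n) by lia. apply IH. simpl. apply in_or_app; right.
  apply in_concat. exists (neighbours x). split; [apply in_map | apply in_neighbours]; auto.
Qed.

Lemma star_superset (T : list V) f0 : exists F R, In f0 F /\ incl T F /\
  forall y, In y F -> exists n, n <= R /\ walk (fun v => In v F) n f0 y.
Proof.
  induction T as [|t T IH].
  - exists [f0], 0. split; [left; auto | split; [intros a [] |]].
    intros y [<-|[]]. exists 0. split; auto. constructor. left; auto.
  - destruct IH as [F [R [Hf0 [HT Hstar]]]]. destruct (conn f0 t) as [p Hp].
    pose proof Hp as [[Hne [_ Hc]] [Hh Hl]]. destruct p as [|x q]; [congruence|].
    simpl in Hh. injection Hh as ->.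
    exists (F ++ f0 :: q), (R + S (length q)). split; [apply in_or_app; auto | split].
    + intros a [<-|Ha]; apply in_or_app; [right; exact (last_in _ _ Hl) | left; auto].
    + intros y Hy. apply in_app_or in Hy. destruct Hy as [Hy|Hy].
      * destruct (Hstar y Hy) as [n [Hn W]]. exists n. split; [lia|].
        eapply walk_weaken; [|exact W]. intros; apply in_or_app; auto.
      * destruct (adj_chain_walk q f0 Hc y Hy) as [n [Hn W]]. exists n. split; [lia|].
        eapply walk_weaken; [|exact W]. intros; apply in_or_app; auto.
Qed.

(** * Translation powers and level functions *)

Section Powers.
Local Open Scope Z_scope.
Variables t ti : V -> V.
Hypothesis t_aut : aut_pair t ti.

Definition tpow (z : Z) (v : V) : V :=
  if 0 <=? z then Nat.iter (Z.to_nat z) t v else Nat.iter (Z.to_nat (- z)) ti v.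

Lemma tpow_succ z v : tpow (z + 1) v = t (tpow z v).
Proof.
  unfold tpow. destruct (Z_le_gt_dec 0 z).
  - replace (0 <=? z + 1) with true by (symmetry; apply Z.leb_le; lia).
    replace (0 <=? z) with true by (symmetry; apply Z.leb_le; lia).
    replace (Z.to_nat (z + 1)) with (S (Z.to_nat z)) by lia. reflexivity.
  - replace (0 <=? z) with false by (symmetry; apply Z.leb_gt; lia).
    destruct (Z.eq_dec z (-1)) as [->|Hz]; [simpl; rewrite (aut_pair_inv_r t_aut); auto|].
    replace (0 <=? z + 1) with false by (symmetry; apply Z.leb_gt; lia).
    replace (Z.to_nat (- z)) with (S (Z.to_nat (- (z + 1)))) by lia.
    simpl. rewrite (aut_pair_inv_r t_aut). auto.
Qed.

Lemma tpow_pred z v : tpow (z - 1) v = ti (tpow z v).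
Proof.
  replace (tpow z v) with (tpow (z - 1 + 1) v) by (f_equal; lia).
  rewrite tpow_succ, (aut_pair_inv_l t_aut). auto.
Qed.

Lemma tpow_add a b v : tpow (a + b) v = tpow a (tpow b v).
Proof.
  induction a as [|a IH|a IH] using Z.peano_ind; [reflexivity| |].
  - replace (Z.succ a + b) with (a + b + 1) by lia. replace (Z.succ a) with (a + 1) by lia.
    rewrite !tpow_succ, IH. auto.
  - replace (Z.pred a + b) with (a + b - 1) by lia. replace (Z.pred a) with (a - 1) by lia.
    rewrite !tpow_pred, IH. auto.
Qed.

Lemma tpow_1 v : tpow 1 v = t v.
Proof. apply (tpow_succ 0). Qed.

Lemma tpow_opp_l z v : tpow (- z) (tpow z v) = v.
Proof. rewrite <- tpow_add. replace (- z + z) with 0 by lia. reflexivity. Qed.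

Lemma tpow_opp_r z v : tpow z (tpow (- z) v) = v.
Proof. rewrite <- tpow_add. replace (z + - z) with 0 by lia. reflexivity. Qed.

Lemma tpow_nat (n : nat) v : tpow (Z.of_nat n) v = Nat.iter n t v.
Proof.
  unfold tpow. replace (0 <=? Z.of_nat n) with true by (symmetry; apply Z.leb_le; lia).
  rewrite Nat2Z.id. auto.
Qed.

Lemma tpow_adj z x y : adj x y -> adj (tpow z x) (tpow z y).
Proof.
  revert x y. induction z as [|z IH|z IH] using Z.peano_ind; intros x y H; [exact H| |].
  - replace (Z.succ z) with (z + 1) by lia. rewrite !tpow_succ. eapply aut_pair_adj; eauto.
  - replace (Z.pred z) with (z - 1) by lia. rewrite !tpow_pred.
    eapply aut_pair_adj; [apply aut_pair_sym|]; eauto.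
Qed.

Lemma tpow_aut z : aut_pair (tpow z) (tpow (- z)).
Proof.
  split; [apply tpow_opp_l | apply tpow_opp_r |].
  intros x y. split; [apply tpow_adj|]. intros H.
  apply (tpow_adj (- z)) in H. rewrite !tpow_opp_l in H. auto.
Qed.

Lemma tpow_inj z x y : tpow z x = tpow z y -> x = y.
Proof. apply (aut_pair_inj _ _ x y (tpow_aut z)). Qed.

End Powers.

Record level_function (t : V -> V) (lev : V -> Z) : Prop := {
  level_function_shift : forall v, lev (t v) = (lev v + 1)%Z;
  level_function_adj : forall u v, adj u v -> (lev u - lev v <= 1)%Z;
  level_function_zero_finite : finite_set (fun v => lev v = 0%Z) }.

(** * A translation of a two-ended graph *)

Section TwoEnds.
Variables r1 r2 : nat -> V.
Hypothesis ray_r1 : ray adj r1.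
Hypothesis ray_r2 : ray adj r2.
Hypothesis two_ends : forall r, ray adj r -> equiv_rays adj r r1 \/ equiv_rays adj r r2.

Lemma finite_set_avoiding_ends X (B : list V) : boundary_in X (fun v => In v B) ->
  eventually (fun v => ~ X v) r1 -> eventually (fun v => ~ X v) r2 -> finite_set X.
Proof.
  intros Hb H1 H2. apply NNPP; intro Hinf.
  destruct (ray_in_infinite_set X B Hb Hinf) as [r [Hr HX]].
  assert (Er : eventually X r) by (exists 0; auto).
  destruct (two_ends r Hr) as [E|E];
    [apply (proj1 (finite_boundary_separates_rays X B r r1 Hb Er H1)) |
     apply (proj1 (finite_boundary_separates_rays X B r r2 Hb Er H2))]; auto.
Qed.

(* Otherwise w r1 and w r2 would both be equivalent to r2, so the ray wi r2 would be
   equivalent to both ends. *)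
Lemma cut_no_aut_moves_both_ends_into F A w wi : cut F A ->
  eventually (opposite_side F A) r1 -> eventually A r2 -> aut_pair w wi ->
  ~ (eventually A (fun n => w (r1 n)) /\ eventually A (fun n => w (r2 n))).
Proof.
  intros Hc H1 H2 Hw [E1 E2].
  assert (Hsep : forall rho sigma, eventually A rho -> eventually (opposite_side F A) sigma ->
            ~ equiv_rays adj rho sigma /\ ~ equiv_rays adj sigma rho).
  { intros rho sigma Hr Hs. apply (finite_boundary_separates_rays A F); auto.
    - exact (cut_boundary Hc).
    - eapply eventually_weaken; [|exact Hs]. intros v []; auto. }
  assert (Hback : forall r, ray adj r -> eventually A (fun n => w (r n)) ->
            equiv_rays adj r (fun n => wi (r2 n))).
  { intros r Hr Er. destruct (two_ends _ (ray_map r w wi Hr Hw)) as [E|E];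
      [exfalso; exact (proj1 (Hsep _ _ Er H1) E)|].
    apply (equiv_rays_map_inv _ _ w wi Hw).
    replace (fun n => w (wi (r2 n))) with r2
      by (apply functional_extensionality; intros; symmetry; apply (aut_pair_inv_r Hw)).
    exact E. }
  destruct (ray_eventually_one_side _ A F (ray_map r2 wi w ray_r2 (aut_pair_sym _ _ Hw))
              (cut_boundary Hc)) as [Ea|Eo].
  - exact (proj2 (Hsep _ _ Ea H1) (Hback r1 ray_r1 E1)).
  - exact (proj1 (Hsep _ _ H2 Eo) (Hback r2 ray_r2 E2)).
Qed.

Record shift_cut (Fk : list V) (Ak : V -> Prop) (t ti : V -> V) : Prop := {
  shift_cut_cut : cut Fk Ak;
  shift_cut_r1 : eventually (opposite_side Fk Ak) r1;
  shift_cut_r2 : eventually Ak r2;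
  shift_cut_nonempty : exists f, In f Fk;
  shift_cut_aut : aut_pair t ti;
  shift_cut_side_into : forall v, Ak v -> Ak (t v);
  shift_cut_separator_into : forall f, In f Fk -> Ak (t f) }.
#[global] Arguments shift_cut_cut {Fk Ak t ti}.
#[global] Arguments shift_cut_r1 {Fk Ak t ti}.
#[global] Arguments shift_cut_r2 {Fk Ak t ti}.
#[global] Arguments shift_cut_nonempty {Fk Ak t ti}.
#[global] Arguments shift_cut_aut {Fk Ak t ti}.
#[global] Arguments shift_cut_side_into {Fk Ak t ti}.
#[global] Arguments shift_cut_separator_into {Fk Ak t ti}.

Section LinkedCut.
Variable F : list V.
Variable R : nat.
Variable f0 : V.
Hypothesis f0_in_F : In f0 F.
Hypothesis F_diameter :
  forall x y, In x F -> In y F -> exists n, n <= R /\ walk (fun v => In v F) n x y.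
Variable reps : list V.
Hypothesis reps_in_F : incl reps F.
Hypothesis reps_orbits : forall v, exists s f, In s reps /\ automorphism adj f /\ f s = v.
Variable C : V -> Prop.
Hypothesis C_cut : cut F C.
Hypothesis CF_linked : linked (fun v => C v \/ In v F).
Hypothesis r1_C : eventually C r1.
Let A := opposite_side F C.
Hypothesis r2_A : eventually A r2.

Lemma cut_A : cut F A.
Proof. exact (cut_opposite_side F C C_cut). Qed.

Lemma F_linked : linked (fun v => In v F).
Proof. intros x y Hx Hy. destruct (F_diameter x y Hx Hy) as [n [_ W]]. eauto. Qed.

Lemma no_aut_moves_both_ends_into_A w wi : aut_pair w wi ->
  ~ (eventually A (fun n => w (r1 n)) /\ eventually A (fun n => w (r2 n))).
Proof.
  apply (cut_no_aut_moves_both_ends_into F A w wi cut_A); auto.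
  eapply eventually_weaken; [|exact r1_C]. intros v Hv. apply opposite_side_involutive; auto.
Qed.

(* Quasi-transitivity maps a representative in F to a far vertex of r2; since F has
   diameter at most R, its whole image is far. *)
Lemma aut_moving_F_into (L K : list V) (Y : V -> Prop) :
  boundary_in Y (fun v => In v K) -> incl K L -> eventually Y r2 ->
  exists h hi, aut_pair h hi /\ (forall f, In f F -> ~ In (h f) L) /\ (forall f, In f F -> Y (h f)).
Proof.
  intros Hb HKL [m0 Hm0]. destruct (ray_eventually_avoids r2 (ball L R) ray_r2) as [N HN].
  set (n := Nat.max N m0).
  destruct (reps_orbits (r2 n)) as [s [h [Hs [Hh Ehs]]]].
  destruct (aut_pair_of_automorphism h Hh) as [hi Hhi].
  assert (Hoff : forall f, In f F -> ~ In (h f) L).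
  { intros f Hf HL. destruct (F_diameter f s Hf (reps_in_F s Hs)) as [k [Hk W]].
    apply (HN n); [lia|]. rewrite <- Ehs. apply (ball_mono L k R); auto.
    refine (walk_in_ball L (fun _ => True) k (h f) (h s) _ 0 HL).
    apply (walk_map (fun v => In v F) (fun _ => True) h); eauto using aut_pair_adj. }
  exists h, hi. split; [|split]; auto.
  intros f Hf. apply (linked_one_side (fun v => In (hi v) F) K Y Hb) with (h s).
  - apply (linked_map h hi (fun v => In v F)); auto using F_linked.
  - intros v Hv HK. apply (Hoff (hi v) Hv). rewrite (aut_pair_inv_r Hhi). auto.
  - rewrite (aut_pair_inv_l Hhi). auto.
  - rewrite (aut_pair_inv_l Hhi). auto.
  - rewrite Ehs. apply Hm0. lia.
Qed.

Lemma aut_image_of_F_one_side g gi : aut_pair g gi -> (forall f, In f F -> ~ In (g f) F) ->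
  (forall f, In f F -> C (gi f)) \/ (forall f, In f F -> A (gi f)).
Proof.
  intros Hg Hoff.
  assert (Hlk : linked (fun v => In (g v) F))
    by (apply (linked_map gi g (fun v => In v F)); auto using aut_pair_sym, F_linked).
  assert (Hav : forall v, In (g v) F -> ~ In v F) by (intros v Hv Hin; exact (Hoff v Hin Hv)).
  assert (Hside : forall f f', In f F -> In f' F -> A (gi f) -> A (gi f')).
  { intros f f' Hf Hf'. apply (linked_one_side _ F A (cut_boundary cut_A) Hlk Hav);
      rewrite (aut_pair_inv_r Hg); auto. }
  destruct (classic (A (gi f0))) as [H|H]; [right|left]; intros f Hf; [eauto|].
  apply (opposite_side_involutive F C (gi f) C_cut). split; [intro; eauto|].
  apply Hav. rewrite (aut_pair_inv_r Hg). auto.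
Qed.

Record moves_F_into_A (g gi : V -> V) : Prop := {
  moves_aut : aut_pair g gi;
  moves_off_F : forall f, In f F -> ~ In (g f) F;
  moves_into_A : forall f, In f F -> A (g f) }.
#[global] Arguments moves_aut {g gi}.
#[global] Arguments moves_off_F {g gi}.
#[global] Arguments moves_into_A {g gi}.

Lemma CF_off_image g gi : moves_F_into_A g gi -> forall v, C v \/ In v F -> ~ In v (map g F).
Proof.
  intros [Hg Hoff Hin] v Hv HvF. apply in_map_iff in HvF. destruct HvF as [f [<- Hf]].
  destruct (Hin f Hf) as [HC HF]. destruct Hv; [apply HC | apply (Hoff f Hf)]; auto.
Qed.

Lemma shift_cut_of_nonflip g gi : moves_F_into_A g gi -> (forall f, In f F -> C (gi f)) ->
  shift_cut F A g gi.
Proof.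
  intros Hm NF. pose proof (moves_aut Hm) as Hg. pose proof (moves_into_A Hm) as HA.
  assert (HC : forall c, C c -> C (gi c)).
  { intros c Hc. apply (linked_one_side _ (map g F) (fun v => C (gi v))
      (cut_boundary (cut_map F C g gi Hg C_cut)) CF_linked (CF_off_image g gi Hm) f0 c); auto. }
  split; auto using cut_A.
  - eapply eventually_weaken; [|exact r1_C]. intros v Hv. apply opposite_side_involutive; auto.
  - exists f0; auto.
  - intros v [Cv Fv]. split; intro H; apply Cv; rewrite <- (aut_pair_inv_l Hg v); auto.
Qed.

Lemma flip_C_into_A g gi : moves_F_into_A g gi -> (forall f, In f F -> A (gi f)) ->
  forall c, C c -> A (gi c).
Proof.
  intros Hm FL c Hc. pose proof (moves_aut Hm) as Hg.
  apply (linked_one_side _ (map g F) (fun v => A (gi v))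
    (cut_boundary (cut_map F A g gi Hg cut_A)) CF_linked (CF_off_image g gi Hm) f0 c); auto.
Qed.

Lemma flip_image_C_in_A g gi : moves_F_into_A g gi -> (forall f, In f F -> A (gi f)) ->
  forall v, C (gi v) -> A v.
Proof.
  intros Hm FL v H. split.
  - intros Cv. exact (proj1 (flip_C_into_A g gi Hm FL v Cv) H).
  - intros Fv. exact (proj1 (FL v Fv) H).
Qed.

Lemma flip_r2_in_image_C g gi : moves_F_into_A g gi -> (forall f, In f F -> A (gi f)) ->
  eventually (fun v => C (gi v)) r2.
Proof.
  intros Hm FL. pose proof (moves_aut Hm) as Hg.
  destruct (ray_eventually_one_side r2 _ (map g F) ray_r2
              (cut_boundary (cut_map F C g gi Hg C_cut))) as [H|H]; auto.
  exfalso. apply (no_aut_moves_both_ends_into_A gi g (aut_pair_sym _ _ Hg)). split.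
  - change (eventually (fun v => A (gi v)) r1).
    eapply eventually_weaken; [|exact r1_C]. exact (flip_C_into_A g gi Hm FL).
  - change (eventually (fun v => A (gi v)) r2).
    eapply eventually_weaken; [|exact H]. intros v Hv.
    apply (opposite_side_map F C g gi v Hg); auto.
Qed.

(* If g swaps the two sides of F, an automorphism g' moving F beyond g(F) either does not
   swap them, or composes with the inverse of g to a shift of the cut (g(F), g(C)). *)
Section DoubleFlip.
Variables g gi g' g'i : V -> V.
Hypothesis g_moves : moves_F_into_A g gi.
Hypothesis g_flips : forall f, In f F -> A (gi f).
Hypothesis g'_aut : aut_pair g' g'i.
Hypothesis g'F_off : forall f, In f F -> ~ In (g' f) (F ++ map g F).
Hypothesis g'F_in_gC : forall f, In f F -> C (gi (g' f)).
Hypothesis g'_flips : forall f, In f F -> A (g'i f).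

Lemma double_flip_gF_in_image_A f : In f F -> A (g'i (g f)).
Proof.
  intros Hf. pose proof (moves_aut g_moves) as Hg.
  assert (HK : linked (fun v => reach (fun u => A (gi u)) f0 v \/ In v (map g F))).
  { apply linked_reach_union.
    - exact (cut_map F A g gi Hg cut_A).
    - apply (linked_ext (fun v => In (gi v) F)).
      + intros v. symmetry. apply in_map_aut_pair; auto.
      + apply (linked_map g gi (fun v => In v F)); auto using F_linked.
    - exists (g f0). apply in_map; auto.
    - apply g_flips; auto. }
  apply (linked_one_side _ (map g' F) (fun v => A (g'i v))
           (cut_boundary (cut_map F A g' g'i g'_aut cut_A)) HK) with f0.
  - intros v Hv Hin. rewrite (in_map_aut_pair g' g'i) in Hin; auto.
    pose proof (g'F_off _ Hin) as Hoff. pose proof (g'F_in_gC _ Hin) as HgC.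
    rewrite (aut_pair_inv_r g'_aut) in Hoff, HgC.
    destruct Hv as [[n W]|Hv]; [exact (proj1 (walk_last _ _ _ _ W) HgC)|].
    apply Hoff, in_or_app; auto.
  - left. exists 0. constructor. apply g_flips; auto.
  - right. apply in_map; auto.
  - apply g'_flips; auto.
Qed.

Lemma double_flip_shift_cut :
  shift_cut (map g F) (fun v => C (gi v)) (fun x => g' (gi x)) (fun x => g (g'i x)).
Proof.
  pose proof (moves_aut g_moves) as Hg.
  assert (Hg'C : forall c, C c -> C (gi (g' c))).
  { intros c Hc. apply (linked_one_side (fun v => C (g'i v) \/ In (g'i v) F) (map g F)
      (fun v => C (gi v)) (cut_boundary (cut_map F C g gi Hg C_cut))) with (g' f0).
    - apply (linked_map g' g'i (fun v => C v \/ In v F)); auto.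
    - intros v [Cv|Fv] Hin; rewrite (in_map_aut_pair g gi) in Hin; auto.
      + pose proof (double_flip_gF_in_image_A _ Hin) as HA.
        rewrite (aut_pair_inv_r Hg) in HA. exact (proj1 HA Cv).
      + apply (g'F_off _ Fv). rewrite (aut_pair_inv_r g'_aut).
        apply in_or_app; right. rewrite (in_map_aut_pair g gi); auto.
    - right. rewrite (aut_pair_inv_l g'_aut). auto.
    - left. rewrite (aut_pair_inv_l g'_aut). auto.
    - apply g'F_in_gC; auto. }
  split.
  - apply cut_map; auto.
  - eapply eventually_weaken; [|exact r1_C]. intros v Hv.
    apply (opposite_side_map F C g gi v Hg). exact (flip_C_into_A g gi g_moves g_flips v Hv).
  - exact (flip_r2_in_image_C g gi g_moves g_flips).
  - exists (g f0). apply in_map; auto.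
  - apply aut_pair_comp; auto using aut_pair_sym.
  - intros v Hv. apply Hg'C. auto.
  - intros f Hf. rewrite (in_map_aut_pair g gi) in Hf; auto.
Qed.

End DoubleFlip.

Lemma shift_cut_exists_from_linked_cut : exists Fk Ak t ti, shift_cut Fk Ak t ti.
Proof.
  destruct (aut_moving_F_into F F A (cut_boundary cut_A) (incl_refl F) r2_A)
    as [g [gi [Hg [Hoff HA]]]].
  assert (Hm : moves_F_into_A g gi) by (split; auto).
  destruct (aut_image_of_F_one_side g gi Hg Hoff) as [NF|FL].
  { exists F, A, g, gi. apply shift_cut_of_nonflip; auto. }
  destruct (aut_moving_F_into (F ++ map g F) (map g F) (fun v => C (gi v))
              (cut_boundary (cut_map F C g gi Hg C_cut)) (incl_appr F (incl_refl _))
              (flip_r2_in_image_C g gi Hm FL)) as [g' [g'i [Hg' [Hoff' HgC]]]].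
  assert (Hm' : moves_F_into_A g' g'i).
  { split; auto.
    - intros f Hf H. apply (Hoff' f Hf), in_or_app; auto.
    - intros f Hf. apply (flip_image_C_in_A g gi Hm FL); auto. }
  destruct (aut_image_of_F_one_side g' g'i Hg' (moves_off_F Hm')) as [NF'|FL'].
  - exists F, A, g', g'i. apply shift_cut_of_nonflip; auto.
  - exists (map g F), (fun v => C (gi v)), (fun x => g' (gi x)), (fun x => g (g'i x)).
    apply (double_flip_shift_cut g gi g' g'i); auto.
Qed.

End LinkedCut.

(* Otherwise pairwise disjoint paths between r1 and r2 could be chosen one after another. *)
Lemma separator : ~ equiv_rays adj r1 r2 ->
  exists F0 : list V, forall m n p, path_from_to adj p (r1 m) (r2 n) -> exists x, In x p /\ In x F0.
Proof.
  intros Hne. apply NNPP; intro Hn.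
  assert (Hmiss : forall F0 : list V, exists p, (exists m n, path_from_to adj p (r1 m) (r2 n)) /\
            forall x, In x p -> ~ In x F0).
  { intros F0. apply NNPP; intro H1. apply Hn. exists F0. intros m n p Hp.
    apply NNPP; intro H2. apply H1. exists p. split; eauto. }
  set (pick := fun F0 => proj1_sig (constructive_indefinite_description _ (Hmiss F0))).
  assert (Hpick : forall F0, (exists m n, path_from_to adj (pick F0) (r1 m) (r2 n)) /\
            forall x, In x (pick F0) -> ~ In x F0).
  { intros F0. unfold pick. destruct (constructive_indefinite_description _ _). auto. }
  set (Qs := fix Qs (i : nat) : list (list V) :=
         match i with 0 => [] | S i => Qs i ++ [pick (concat (Qs i))] end).
  set (P := fun i => pick (concat (Qs i))).
  assert (HQ : forall i j, i < j -> In (P i) (Qs j)).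
  { intros i j Hij. induction Hij; simpl; apply in_or_app; auto. right; left; auto. }
  apply Hne. exists P. split; [intros i; apply (proj1 (Hpick _))|].
  intros i j x Hij H1 H2. destruct (Nat.lt_trichotomy i j) as [h|[h|h]]; [|contradiction|].
  - apply (proj2 (Hpick (concat (Qs j))) x H2). apply in_concat. exists (P i). auto.
  - apply (proj2 (Hpick (concat (Qs i))) x H1). apply in_concat. exists (P j). auto.
Qed.

Lemma shift_cut_exists (reps : list V) : ~ equiv_rays adj r1 r2 ->
  (forall v, exists s f, In s reps /\ automorphism adj f /\ f s = v) ->
  exists Fk Ak t ti, shift_cut Fk Ak t ti.
Proof.
  intros Hne HS. destruct (separator Hne) as [F0 HF0].
  destruct (star_superset (F0 ++ reps) (r1 0)) as [F [R [Hf0 [HT Hstar]]]].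
  assert (Hlink : forall x y, In x F -> In y F ->
            exists n, n <= R + R /\ walk (fun v => In v F) n x y).
  { intros x y Hx Hy. destruct (Hstar x Hx) as [n [Hn Wx]], (Hstar y Hy) as [m [Hm Wy]].
    exists (n + m). split; [lia|]. apply walk_app with (r1 0); auto. apply walk_rev; auto. }
  destruct (ray_eventually_avoids r1 F ray_r1) as [N1 HN1].
  set (C := reach (fun u => ~ In u F) (r1 N1)).
  assert (HC : cut F C) by apply cut_reach, cut_complement.
  assert (HCF : linked (fun v => C v \/ In v F)).
  { apply linked_reach_union; [apply cut_complement | | exists (r1 0); auto | apply HN1; auto].
    intros x y Hx Hy. destruct (Hlink x y Hx Hy) as [n [_ W]]. eauto. }
  assert (Hr1 : eventually C r1).
  { exists N1. intros m Hm. induction Hm as [|m Hm [n W]]; [exists 0; constructor; auto|].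
    exists (S n). eapply walk_snoc; [exact W | apply ray_r1 | apply HN1; lia]. }
  assert (Hr2 : eventually (opposite_side F C) r2).
  { destruct (ray_eventually_avoids r2 F ray_r2) as [N2 HN2]. exists N2.
    intros n Hn. split; [|apply HN2; auto]. intros [k W].
    destruct (walk_path _ _ _ _ W) as [p [Hp Hpv]]. destruct (HF0 _ _ _ Hp) as [x [Hxp HxF]].
    apply (Hpv x Hxp). apply HT. apply in_or_app; auto. }
  apply (shift_cut_exists_from_linked_cut F (R + R) (r1 0) Hf0 Hlink reps) with C; auto.
  intros s Hs. apply HT. apply in_or_app; auto.
Qed.

Section Levels.
Local Open Scope Z_scope.
Variables (Fk : list V) (Ak : V -> Prop) (t ti : V -> V).
Hypothesis sc : shift_cut Fk Ak t ti.
Let t_aut := shift_cut_aut sc.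
Let Ak_cut := shift_cut_cut sc.
Notation tp := (tpow t ti).

Definition beyond (j : Z) (v : V) : Prop := Ak (tp (- j) v).

Lemma beyond_antitone j j' v : j' <= j -> beyond j v -> beyond j' v.
Proof.
  intros Hj. replace j with (j' + Z.of_nat (Z.to_nat (j - j'))) by lia.
  generalize (Z.to_nat (j - j')) as n. induction n as [|n IH]; [rewrite Z.add_0_r; auto|].
  intros H. apply IH. unfold beyond in *.
  replace (- (j' + Z.of_nat n)) with (1 + - (j' + Z.of_nat (S n))) by lia.
  rewrite (tpow_add t ti t_aut), (tpow_1 t ti t_aut). apply (shift_cut_side_into sc); auto.
Qed.

Lemma beyond_t j v : beyond j (t v) <-> beyond (j - 1) v.
Proof.
  unfold beyond. rewrite <- (tpow_1 t ti t_aut v), <- (tpow_add t ti t_aut).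
  replace (- j + 1) with (- (j - 1)) by lia. tauto.
Qed.

Lemma beyond_boundary j : boundary_in (beyond j) (fun v => In (tp (- j) v) Fk).
Proof.
  intros x y Hx Hxy Hy. apply (cut_boundary Ak_cut (tp (- j) x)); auto. apply tpow_adj; auto.
Qed.

Lemma tpow_pos_Fk_in_Ak z f : 1 <= z -> In f Fk -> Ak (tp z f).
Proof.
  intros Hz Hf. replace z with (Z.of_nat (S (Z.to_nat (z - 1)))) by lia.
  rewrite (tpow_nat t ti). generalize (Z.to_nat (z - 1)) as n.
  induction n as [|n IH]; simpl in *; [|apply (shift_cut_side_into sc); auto].
  apply (shift_cut_separator_into sc); auto.
Qed.

Lemma translates_of_Fk_disjoint i j y : In (tp (- i) y) Fk -> In (tp (- j) y) Fk -> i = j.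
Proof.
  intros Hi Hj. apply NNPP; intro Hij.
  assert (Hlt : forall i j, i < j -> In (tp (- i) y) Fk -> In (tp (- j) y) Fk -> False).
  { clear i j Hi Hj Hij. intros i j Hlt Hi Hj. apply (cut_disjoint Ak_cut (tp (- i) y)); auto.
    replace (tp (- i) y) with (tp (j - i) (tp (- j) y))
      by (rewrite <- (tpow_add t ti t_aut); f_equal; lia).
    apply tpow_pos_Fk_in_Ak; auto; lia. }
  destruct (Z.lt_trichotomy i j) as [h|[h|h]]; eauto.
Qed.

Lemma beyond_Fk f j : In f Fk -> (beyond j f <-> j <= -1).
Proof.
  intros Hf. split.
  - intros H. apply Z.nlt_ge. intros Hj. apply (cut_disjoint Ak_cut f); auto.
    exact (beyond_antitone j 0 f ltac:(lia) H).
  - intros Hj. apply tpow_pos_Fk_in_Ak; auto; lia.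
Qed.

Lemma crossings_bounded (p : list V) n x y (js : nat -> Z) (N : nat) :
  walk (fun z => In z p) n x y -> (forall i i', js i = js i' -> i = i') ->
  (forall i, (i < N)%nat -> beyond (js i) x /\ ~ beyond (js i) y) -> (N <= length p)%nat.
Proof.
  intros W Hinj H. apply (injective_choice_length_le (fun i z => In (tp (- js i) z) Fk) p).
  - intros i Hi. destruct (H i Hi) as [Hx Hy].
    destruct (walk_meets_boundary _ _ _ n x y (beyond_boundary (js i)) W Hx Hy) as [z Hz]. eauto.
  - intros i i' z H1 H2. exact (Hinj _ _ (translates_of_Fk_disjoint _ _ _ H1 H2)).
Qed.

Lemma beyond_some v : exists j, beyond j v.
Proof.
  apply NNPP; intro Hn. destruct (shift_cut_nonempty sc) as [f Hf].
  destruct (connected_walk_in_list f v) as [p [n W]].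
  assert (S (length p) <= length p)%nat; [|lia].
  apply (crossings_bounded p n f v (fun i => -1 - Z.of_nat i) _ W).
  { intros i i' E. cbv beta in E. lia. }
  intros i _. split; [apply beyond_Fk; auto; lia | intro H; apply Hn; eauto].
Qed.

Lemma not_beyond_some v : exists j, ~ beyond j v.
Proof.
  apply NNPP; intro Hn. destruct (shift_cut_nonempty sc) as [f Hf].
  destruct (connected_walk_in_list v f) as [p [n W]].
  assert (S (length p) <= length p)%nat; [|lia].
  apply (crossings_bounded p n v f Z.of_nat _ W); [intros; lia|].
  intros i _. split; [apply NNPP; intro H; apply Hn; eauto | rewrite beyond_Fk; auto; lia].
Qed.

Lemma level_exists v : exists j, beyond (j - 1) v /\ ~ beyond j v.
Proof.
  destruct (beyond_some v) as [j0 H0], (not_beyond_some v) as [j1 H1].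
  assert (Hlt : j0 < j1) by (apply Z.nle_gt; intro; apply H1; apply (beyond_antitone j0); auto).
  assert (Hgen : forall (n : nat) j, beyond j v -> ~ beyond (j + Z.of_nat n) v ->
            exists j', beyond (j' - 1) v /\ ~ beyond j' v).
  { induction n as [|n IH]; intros j Hj Hn; [rewrite Z.add_0_r in Hn; tauto|].
    destruct (classic (beyond (j + 1) v)) as [Hq|Hq].
    - apply (IH (j + 1)); auto. replace (j + 1 + Z.of_nat n) with (j + Z.of_nat (S n)) by lia. auto.
    - exists (j + 1). replace (j + 1 - 1) with j by lia. auto. }
  apply (Hgen (Z.to_nat (j1 - j0)) j0 H0).
  replace (j0 + Z.of_nat (Z.to_nat (j1 - j0))) with j1 by lia. auto.
Qed.

Definition level (v : V) : Z := proj1_sig (constructive_indefinite_description _ (level_exists v)).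

Lemma level_spec v : beyond (level v - 1) v /\ ~ beyond (level v) v.
Proof. unfold level. destruct (constructive_indefinite_description _ _). auto. Qed.

Lemma level_unique v j : beyond (j - 1) v -> ~ beyond j v -> level v = j.
Proof.
  intros H1 H2. destruct (level_spec v) as [L1 L2].
  destruct (Z.lt_trichotomy (level v) j) as [h|[h|h]]; auto; exfalso.
  - apply L2. apply (beyond_antitone (j - 1)); auto; lia.
  - apply H2. apply (beyond_antitone (level v - 1)); auto; lia.
Qed.

Lemma level_t v : level (t v) = level v + 1.
Proof.
  destruct (level_spec v) as [L1 L2]. apply level_unique; rewrite beyond_t.
  - replace (level v + 1 - 1 - 1) with (level v - 1) by lia. auto.
  - replace (level v + 1 - 1) with (level v) by lia. auto.
Qed.

Lemma level_adj u v : adj u v -> level u - level v <= 1.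
Proof.
  intros Huv. apply Z.nlt_ge. intros Hlt.
  destruct (level_spec u) as [U1 U2], (level_spec v) as [V1 V2].
  set (j := level v).
  assert (Hu1 : beyond j u) by (apply (beyond_antitone (level u - 1)); auto; lia).
  assert (Hu2 : beyond (j + 1) u) by (apply (beyond_antitone (level u - 1)); auto; lia).
  assert (Hv2 : ~ beyond (j + 1) v)
    by (intro H; apply V2; apply (beyond_antitone (j + 1)); auto; lia).
  pose proof (translates_of_Fk_disjoint _ _ _ (beyond_boundary j u v Hu1 Huv V2)
                (beyond_boundary (j + 1) u v Hu2 Huv Hv2)). lia.
Qed.

Lemma level_zero_fundamental v : level v = 0 -> Ak (t v) /\ ~ Ak v.
Proof.
  intros H. destruct (level_spec v) as [L1 L2]. rewrite H in L1, L2.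
  unfold beyond in *. simpl in *. rewrite <- (tpow_1 t ti t_aut). auto.
Qed.

(* r2 eventually stays in Ak, and t r1 eventually stays outside Ak, as otherwise t would move
   both ends into Ak. *)
Lemma fundamental_domain_finite : finite_set (fun v => Ak (t v) /\ ~ Ak v).
Proof.
  apply (finite_set_avoiding_ends _ (map ti Fk ++ concat (map neighbours Fk))).
  - intros x y [Ax1 Ax2] Hxy Hy. apply in_or_app.
    destruct (classic (Ak y)) as [Ay|Ay].
    + right. apply in_concat. exists (neighbours x).
      split; [apply in_map; apply (cut_boundary Ak_cut y x); auto | apply in_neighbours; auto].
    + left. rewrite (in_map_aut_pair ti t); [|apply aut_pair_sym; exact t_aut].
      apply (cut_boundary Ak_cut (t x)); [auto | eapply aut_pair_adj; eauto | tauto].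
  - destruct (ray_eventually_one_side _ Ak Fk (ray_map r1 t ti ray_r1 t_aut) (cut_boundary Ak_cut))
      as [E|[m Hm]].
    + exfalso. apply (cut_no_aut_moves_both_ends_into Fk Ak t ti Ak_cut (shift_cut_r1 sc)
                       (shift_cut_r2 sc) t_aut). split; auto.
      destruct (shift_cut_r2 sc) as [m Hm]. exists m. intros; apply (shift_cut_side_into sc); auto.
    + exists m. intros n Hn [H _]. exact (proj1 (Hm n Hn) H).
  - destruct (shift_cut_r2 sc) as [m Hm]. exists m. intros n Hn [_ H]. auto.
Qed.

Lemma shift_cut_level_function : exists lev, level_function t lev.
Proof.
  exists level. split; [exact level_t | exact level_adj |].
  apply (finite_set_subset _ _ level_zero_fundamental fundamental_domain_finite).
Qed.

End Levels.

End TwoEnds.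

(** * Periodic recolouring *)

Section PeriodicColoring.
Local Open Scope Z_scope.
Variables t ti : V -> V.
Hypothesis t_aut : aut_pair t ti.
Variable lev : V -> Z.
Hypothesis lev_shift : forall v, lev (t v) = lev v + 1.
Hypothesis lev_adj : forall u v, adj u v -> lev u - lev v <= 1.
Variable L0 : list V.
Hypothesis L0_level_zero : forall v, lev v = 0 -> In v L0.
Variable k : nat.
Variable c0 : V -> V -> nat.
Hypothesis c0_proper : proper_edge_coloring adj k c0.
Notation tp := (tpow t ti).

Lemma level_tpow z v : lev (tp z v) = lev v + z.
Proof.
  revert v. induction z as [|z IH|z IH] using Z.peano_ind; intros v.
  - change (tp 0 v) with v. lia.
  - replace (Z.succ z) with (z + 1) by lia. rewrite (tpow_succ t ti t_aut), lev_shift, IH. lia.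
  - replace (Z.pred z) with (z - 1) by lia. rewrite (tpow_pred t ti t_aut).
    pose proof (lev_shift (ti (tp z v))) as E. rewrite (aut_pair_inv_r t_aut), IH in E. lia.
Qed.

Definition slab : list V := L0 ++ map t L0.

Lemma in_slab v : lev v = 0 \/ lev v = 1 -> In v slab.
Proof.
  intros [H|H]; apply in_or_app; [left; auto|right].
  rewrite <- (aut_pair_inv_r t_aut v). apply in_map, L0_level_zero.
  pose proof (lev_shift (ti v)) as E. rewrite (aut_pair_inv_r t_aut) in E. lia.
Qed.

(* Non-edges of the slab carry junk colours; capping at [k] keeps the patterns in a finite set. *)
Definition pattern (n : nat) : list nat :=
  map (fun xy => Nat.min k (c0 (tp (Z.of_nat n) (fst xy)) (tp (Z.of_nat n) (snd xy))))
    (list_prod slab slab).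

Lemma pattern_repeats : exists a b, (a < b)%nat /\ pattern a = pattern b.
Proof.
  apply (finite_range_repeats pattern (bounded_lists (length (list_prod slab slab)) k)).
  intros n. apply in_bounded_lists; [apply length_map|].
  apply Forall_forall. intros x Hx. apply in_map_iff in Hx. destruct Hx as [xy [<- _]]. lia.
Qed.

Section Period.
Variables a b : nat.
Hypothesis a_lt_b : (a < b)%nat.
Hypothesis pattern_ab : pattern a = pattern b.
Let a0 := Z.of_nat a.
Let p := Z.of_nat (b - a).

Lemma c0_periodic_on_slab x y : adj x y ->
  (lev x = a0 \/ lev x = a0 + 1) -> (lev y = a0 \/ lev y = a0 + 1) ->
  c0 x y = c0 (tp p x) (tp p y).
Proof.
  intros Hxy Hx Hy.
  set (x0 := tp (- a0) x). set (y0 := tp (- a0) y).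
  assert (Ix : In x0 slab) by (apply in_slab; unfold x0; rewrite level_tpow; lia).
  assert (Iy : In y0 slab) by (apply in_slab; unfold y0; rewrite level_tpow; lia).
  pose proof (ext_in_map pattern_ab (x0, y0) (in_prod _ _ _ _ Ix Iy)) as E. simpl in E.
  assert (Ea : forall v, tp (Z.of_nat a) (tp (- a0) v) = v) by (intros; apply tpow_opp_r; auto).
  assert (Eb : forall v, tp (Z.of_nat b) (tp (- a0) v) = tp p v)
    by (intros; rewrite <- (tpow_add t ti t_aut); f_equal; unfold p, a0; lia).
  unfold x0, y0 in E. rewrite !Ea, !Eb in E.
  destruct c0_proper as [_ [Hk _]].
  pose proof (Hk _ _ Hxy). pose proof (Hk _ _ (tpow_adj t ti t_aut p _ _ Hxy)). lia.
Qed.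

Definition block (u v : V) : Z := (Z.min (lev u) (lev v) - a0) / p.

Definition periodic_recoloring (u v : V) : nat :=
  c0 (tp (- (block u v * p)) u) (tp (- (block u v * p)) v).

Lemma block_change x y z : adj x y -> adj x z ->
  Z.min (lev x) (lev y) = lev x - 1 -> Z.min (lev x) (lev z) = lev x -> block x y <> block x z ->
  block x z = block x y + 1 /\ lev x - a0 = block x z * p.
Proof.
  unfold block. intros _ _ -> -> Hq.
  assert (Hp : 0 < p) by (unfold p; lia).
  pose proof (Z.div_mod (lev x - a0) p ltac:(lia)). pose proof (Z.mod_pos_bound (lev x - a0) p Hp).
  pose proof (Z.div_mod (lev x - 1 - a0) p ltac:(lia)).
  pose proof (Z.mod_pos_bound (lev x - 1 - a0) p Hp). nia.
Qed.

Lemma periodic_recoloring_proper_at_block_change x y z : adj x y -> adj x z -> y <> z ->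
  Z.min (lev x) (lev y) = lev x - 1 -> Z.min (lev x) (lev z) = lev x -> block x y <> block x z ->
  periodic_recoloring x y <> periodic_recoloring x z.
Proof.
  intros Hy Hz Hyz My Mz Hq. destruct (block_change x y z Hy Hz My Mz Hq) as [Eq Elev].
  (* Moved by its own block, xz lies in the slab [a0, a0 + 1], where c0 agrees with the
     translate by t^p; that translate is xz moved by the block of xy. *)
  unfold periodic_recoloring. rewrite Eq.
  set (s := block x y * p). replace ((block x y + 1) * p) with (s + p) by (unfold s; ring).
  assert (Lx : lev (tp (- (s + p)) x) = a0) by (rewrite level_tpow; unfold s; nia).
  assert (Lz : lev (tp (- (s + p)) z) = a0 \/ lev (tp (- (s + p)) z) = a0 + 1).
  { rewrite level_tpow. pose proof (lev_adj _ _ Hz). pose proof (lev_adj _ _ (adj_sym _ _ Hz)).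
    assert (lev x <= lev z) by lia. unfold s; nia. }
  rewrite (c0_periodic_on_slab _ _ (tpow_adj t ti t_aut _ _ _ Hz) (or_introl Lx) Lz).
  rewrite <- !(tpow_add t ti t_aut). replace (p + - (s + p)) with (- s) by lia.
  destruct c0_proper as [_ [_ Hpr]]. apply Hpr; try apply tpow_adj; auto.
  intro E. apply (tpow_inj t ti t_aut) in E. auto.
Qed.

Lemma periodic_recoloring_proper : proper_edge_coloring adj k periodic_recoloring.
Proof.
  destruct c0_proper as [Hs [Hk Hpr]]. split; [|split].
  - intros x y Hxy. unfold periodic_recoloring, block. rewrite Z.min_comm.
    apply Hs, tpow_adj; auto.
  - intros x y Hxy. apply Hk, tpow_adj; auto.
  - intros x y z Hy Hz Hyz. destruct (Z.eq_dec (block x y) (block x z)) as [E|E].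
    + unfold periodic_recoloring. rewrite E. apply Hpr; try apply tpow_adj; auto.
      intro E'. apply (tpow_inj t ti t_aut) in E'. auto.
    + assert (Z.min (lev x) (lev y) <> Z.min (lev x) (lev z))
        by (intro E'; apply E; unfold block; rewrite E'; auto).
      pose proof (lev_adj _ _ Hy). pose proof (lev_adj _ _ (adj_sym _ _ Hy)).
      pose proof (lev_adj _ _ Hz). pose proof (lev_adj _ _ (adj_sym _ _ Hz)).
      destruct (Z.eq_dec (Z.min (lev x) (lev y)) (lev x - 1)).
      * apply periodic_recoloring_proper_at_block_change; auto; lia.
      * intro E'. symmetry in E'. revert E'.
        apply periodic_recoloring_proper_at_block_change; auto; lia.
Qed.

Lemma periodic_recoloring_tpow (q : Z) x y :
  periodic_recoloring (tp (q * p) x) (tp (q * p) y) = periodic_recoloring x y.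
Proof.
  unfold periodic_recoloring, block. rewrite !level_tpow.
  replace (Z.min (lev x + q * p) (lev y + q * p) - a0)
    with ((Z.min (lev x) (lev y) - a0) + q * p) by lia.
  rewrite Z.div_add by (unfold p; lia).
  rewrite <- !(tpow_add t ti t_aut). f_equal; f_equal; ring.
Qed.

Lemma periodic_recoloring_periodic : periodic_coloring adj periodic_recoloring.
Proof.
  assert (Hp : 0 < p) by (unfold p; lia).
  exists (flat_map (fun r => map (tp (a0 + Z.of_nat r)) L0) (seq 0 (b - a))).
  intros v. set (q := (lev v - a0) / p). set (w := tp (- (q * p)) v).
  pose proof (Z.div_mod (lev v - a0) p ltac:(lia)). pose proof (Z.mod_pos_bound (lev v - a0) p Hp).
  assert (Lw : a0 <= lev w < a0 + p) by (unfold w; rewrite level_tpow; unfold q in *; nia).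
  exists w, (tp (q * p)). split; [|split].
  - apply in_flat_map. exists (Z.to_nat (lev w - a0)). split; [apply in_seq; unfold p in Lw; lia|].
    apply in_map_iff. exists (tp (- lev w) w). split.
    + replace (a0 + Z.of_nat (Z.to_nat (lev w - a0))) with (lev w) by lia. apply tpow_opp_r; auto.
    + apply L0_level_zero. rewrite level_tpow. lia.
  - split; [apply (automorphism_of_aut_pair _ _ (tpow_aut t ti t_aut (q * p)))|].
    intros x y _. apply periodic_recoloring_tpow.
  - apply tpow_opp_r; auto.
Qed.

End Period.

Lemma periodic_coloring_from_levels :
  exists c, proper_edge_coloring adj k c /\ periodic_coloring adj c.
Proof.
  destruct pattern_repeats as [a [b [Hab Hpat]]].
  exists (periodic_recoloring a b). split.
  - apply periodic_recoloring_proper; auto.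
  - apply periodic_recoloring_periodic; auto.
Qed.

End PeriodicColoring.

Lemma periodic_coloring_of_level_function t ti lev k c0 :
  aut_pair t ti -> level_function t lev -> proper_edge_coloring adj k c0 ->
  exists c, proper_edge_coloring adj k c /\ periodic_coloring adj c.
Proof.
  intros Ht [Hshift Hadj [L0 HL0]] Hc0.
  exact (periodic_coloring_from_levels t ti Ht lev Hshift Hadj L0 HL0 k c0 Hc0).
Qed.

End Graph.

Theorem corollary5p5 (V : Type) (adj : V -> V -> Prop) :
  simple_graph adj -> connected adj -> locally_finite adj ->
  quasi_transitive adj -> has_exactly_two_ends adj ->
  forall k : nat, is_chromatic_index adj k ->
  exists c : V -> V -> nat,
    proper_edge_coloring adj k c /\ periodic_coloring adj c.
Proof.
  intros [Hsym _] Hconn Hlf [reps Hreps] [r1 [r2 [Hr1 [Hr2 [Hne Hends]]]]] k [[c0 Hc0] _].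
  destruct (shift_cut_exists adj Hsym Hlf Hconn r1 r2 Hr1 Hr2 Hends reps Hne Hreps)
    as [Fk [Ak [t [ti Hsc]]]].
  destruct (shift_cut_level_function adj Hsym Hlf Hconn r1 r2 Hr1 Hr2 Hends Fk Ak t ti Hsc)
    as [lev Hlev].
  exact (periodic_coloring_of_level_function adj Hsym t ti lev k c0
           (shift_cut_aut adj r1 r2 Hsc) Hlev Hc0).
Qed.
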